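(* If $n$ is a non-negative integer, then $$\sum_{k = 1}^n \sum_{j = 0}^{k - 1} \frac{( - 1)^j }{n - j}\binom{n}{j}^3 = \begin{cases} ( - 1)^{n/2} \binom{n}{n/2}\binom{3n/2}{n}-1,&\text{if $n$ is even;} \\ 1,&\text{if $n$ is odd.} \end{cases}$$
   Context: Empty sums are zero. *)

From mathcomp Require Import all_boot all_order all_algebra.

From mathcomp Require Import all_boot all_order all_algebra.
From mathcomp Require Import ring zify.
Import GRing.Theory Num.Theory.
Local Open Scope ring_scope.

(* Exchanging the two sums, the weight 1/(n-j) is cancelled by the n-j values
   of k > j, so the left-hand side is the alternating sum of cubed binomials
   with its last term (-1)^n removed. For odd n that full sum vanishes by the
   symmetry j <-> n-j. For n = 2m it is Dixon's identity
   sum_j (-1)^j C(2m,j)^3 = (-1)^m (3m)!/m!^3, proved by Zeilberger's method: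
   an explicit certificate telescopes to the recurrence
   (m+1)^3 a(m+1) = -(3m+1)(3m+2)(3m+3) a(m). *)

Lemma sum_nat_triangle (V : nmodType) (g : nat -> V) (N : nat) :
  \sum_(1 <= k < N.+1) \sum_(0 <= j < k) g j = \sum_(0 <= j < N) g j *+ (N - j).
Proof.
elim: N => [|N IH]; first by rewrite !big_geq.
rewrite big_nat_recr //= IH !big_nat_recr //= subSnn addrA -big_split /=.
congr (_ + _); apply: eq_big_nat => j /andP[_ lt_jN].
by rewrite subSn ?(ltnW lt_jN) // mulrSr.
Qed.

Lemma alternating_sum_sym_odd {R : numDomainType} (F : nat -> R) (n : nat) :
  odd n -> (forall j, (j <= n)%N -> F (n - j)%N = F j) ->
  \sum_(0 <= j < n.+1) (-1) ^+ j * F j = 0.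
Proof.
move=> odd_n F_sym; set D := \sum_(_ <= _ < _) _.
have D_opp : D = - D.
  rewrite {1}/D big_nat_rev -sumrN; apply: eq_big_nat => j /andP[_ lt_jn].
  rewrite add0n subSS F_sym // -signr_odd oddB // odd_n addTb signrN signr_odd.
  by rewrite mulNr.
by have := mulrn_eq0 D 2; rewrite mulr2n {2}D_opp subrr eqxx => /esym/eqP.
Qed.

Lemma bin_trinomial_fact m : ('C(2 * m, m) * 'C(3 * m, 2 * m) * m`! ^ 3 = (3 * m)`!)%N.
Proof.
have le_m2m : (m <= 2 * m)%N by lia.
have le_2m3m : (2 * m <= 3 * m)%N by lia.
rewrite -(bin_fact le_2m3m) -(bin_fact le_m2m) (_ : 3 * m - 2 * m = m)%N; last by lia.
rewrite (_ : 2 * m - m = m)%N; last by lia.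
by rewrite (mulnC 'C(2 * m, m)) -!mulnA mulnn -expnS.
Qed.

Section Dixon.
Variable R : numFieldType.

Definition dixon_term (m j : nat) : R := (-1) ^+ j * 'C(2 * m, j)%:R ^+ 3.

(* Certificate produced by Zeilberger's algorithm. *)
Definition dixon_cert (m j : nat) : R :=
  let M : R := m%:R in let t : R := j%:R * ((2 * m).+1%:R - j%:R) in
  (-1) ^+ j * 'C((2 * m).+1, j)%:R ^+ 3 / (2 * M + 1) ^+ 3 *
  ((M + 1) ^+ 3 * (2 * M + 1) ^+ 3
   + t * (3 / 2 + 9 * M + 39 / 2 * M ^+ 2 + 18 * M ^+ 3 + 6 * M ^+ 4)
   + t ^+ 2 * (3 + 15 / 2 * M + 9 / 2 * M ^+ 2)).

Lemma dixon_cert_diff m j : (j <= 2 * m)%N ->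
  m.+1%:R ^+ 3 * dixon_term m.+1 j.+1
  + ((3 * m).+1 * (3 * m).+2 * (3 * m).+3)%:R * dixon_term m j
  = dixon_cert m j.+1 - dixon_cert m j.
Proof.
move=> le_j2m.
have nz_2m1j : ((2 * m).+1 - j)%:R != 0 :> R by rewrite pnatr_eq0 subn_eq0 -ltnNge ltnS.
have nz_j1 : j.+1%:R != 0 :> R by rewrite pnatr_eq0.
have C1 : 'C((2 * m).+1, j)%:R = (2 * m).+1%:R / ((2 * m).+1 - j)%:R * 'C(2 * m, j)%:R :> R.
  by rewrite mulrAC -natrM mul_bin_down natrM mulrC mulKf.
have C2 : 'C((2 * m).+1, j.+1)%:R = (2 * m).+1%:R / j.+1%:R * 'C(2 * m, j)%:R :> R.
  by rewrite mulrAC -natrM mul_bin_diag natrM mulrC mulKf.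
have C3 : 'C((2 * m).+2, j.+1)%:R = (2 * m).+2%:R / j.+1%:R * 'C((2 * m).+1, j)%:R :> R.
  by rewrite mulrAC -natrM mul_bin_diag natrM mulrC mulKf.
rewrite /dixon_term /dixon_cert (_ : 2 * m.+1 = (2 * m).+2)%N; last by lia.
rewrite C3 C1 C2 [(-1) ^+ j.+1]exprS (natrB _ (leqW le_j2m)); field.
rewrite !(addrC 1) -natrM !natr1 -(natrB _ (leqW le_j2m)) nz_2m1j nz_j1.
by rewrite pnatr_eq0.
Qed.

Lemma dixon_term0 m : dixon_term m 0 = 1.
Proof. by rewrite /dixon_term bin0 expr1n mul1r. Qed.

Lemma dixon_term_last m : dixon_term m (2 * m) = 1.
Proof. by rewrite /dixon_term binn expr1n mulr1 exprM sqrrN !expr1n. Qed.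

Lemma dixon_cert0 m : dixon_cert m 0 = m.+1%:R ^+ 3.
Proof.
rewrite /dixon_cert bin0 !mul0r expr0n addr0 /=; field.
by rewrite -natrM natr1 pnatr_eq0.
Qed.

Lemma dixon_cert_last m : dixon_cert m (2 * m).+1 = - m.+1%:R ^+ 3.
Proof.
rewrite /dixon_cert binn subrr mulr0 exprS exprM sqrrN !expr1n expr0n /=; field.
by rewrite -natrM natr1 pnatr_eq0.
Qed.

Definition dixon_sum (m : nat) : R := \sum_(0 <= j < (2 * m).+1) dixon_term m j.

Lemma dixon_sum_rec m :
  m.+1%:R ^+ 3 * dixon_sum m.+1
  = - (((3 * m).+1 * (3 * m).+2 * (3 * m).+3)%:R * dixon_sum m).
Proof.
set a := m.+1%:R ^+ 3; set c := ((3 * m).+1 * (3 * m).+2 * (3 * m).+3)%:R.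
have tele : \sum_(0 <= j < (2 * m).+1) (a * dixon_term m.+1 j.+1 + c * dixon_term m j)
            = dixon_cert m (2 * m).+1 - dixon_cert m 0.
  by apply: telescope_sumr_eq => // j /andP[_]; rewrite ltnS; exact: dixon_cert_diff.
rewrite big_split /= -!mulr_sumr dixon_cert_last dixon_cert0 -/a in tele.
rewrite /dixon_sum big_nat_recr //= dixon_term_last (_ : 2 * m.+1 = (2 * m).+2)%N; last by lia.
rewrite big_nat_recl //= dixon_term0.
set T := \sum_(0 <= j < (2 * m).+1) dixon_term m.+1 j.+1.
have -> : c * \sum_(0 <= j < (2 * m).+1) dixon_term m j = - a - a - a * T.
  by rewrite -tele addrAC subrr add0r.
ring.
Qed.

Lemma dixon_sum_fact m : dixon_sum m * m`!%:R ^+ 3 = (-1) ^+ m * (3 * m)`!%:R.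
Proof.
elim: m => [|m IH].
  by rewrite /dixon_sum big_nat1 dixon_term0 muln0 fact0 expr1n expr0 !mul1r.
rewrite factS natrM exprMn mulrA [dixon_sum _ * _]mulrC dixon_sum_rec mulNr -mulrA IH.
rewrite (_ : 3 * m.+1 = (3 * m).+3)%N; last by lia.
by rewrite !factS !natrM exprS; ring.
Qed.

Lemma dixon_identity m :
  \sum_(0 <= j < (2 * m).+1) (-1) ^+ j * 'C(2 * m, j)%:R ^+ 3
  = (-1) ^+ m * ('C(2 * m, m) * 'C(3 * m, 2 * m))%:R :> R.
Proof.
have nz_fact : m`!%:R ^+ 3 != 0 :> R by rewrite expf_neq0 // pnatr_eq0 -lt0n fact_gt0.
apply: (mulIf nz_fact); rewrite -[LHS]/(dixon_sum m * _) dixon_sum_fact.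
by rewrite -mulrA -natrX -natrM bin_trinomial_fact.
Qed.

End Dixon.

Theorem proposition18 (n : nat) :
  \sum_(1 <= k < n.+1) \sum_(0 <= j < k)
     ((-1) ^+ j / (n - j)%:R * ('C(n, j) ^ 3)%:R : rat)
  = if ~~ odd n then (-1) ^+ n./2 * ('C(n, n./2) * 'C(3 * n./2, n))%:R - 1
    else 1.
Proof.
have weight_cancel j : (j < n)%N ->
    ((-1) ^+ j / (n - j)%:R * ('C(n, j) ^ 3)%:R) *+ (n - j)
    = (-1) ^+ j * 'C(n, j)%:R ^+ 3 :> rat.
  move=> lt_jn; rewrite -mulr_natl mulrA mulrCA mulfV ?mulr1 ?natrX //.
  by rewrite pnatr_eq0 subn_eq0 -ltnNge.
rewrite sum_nat_triangle.
under eq_big_nat => j /andP[_ lt_jn] do rewrite weight_cancel //.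
have drop_last : \sum_(0 <= j < n) (-1) ^+ j * 'C(n, j)%:R ^+ 3
    = \sum_(0 <= j < n.+1) (-1) ^+ j * 'C(n, j)%:R ^+ 3 - (-1) ^+ n :> rat.
  by rewrite big_nat_recr //= binn expr1n mulr1 addrK.
rewrite drop_last; case: ifPn => [even_n | /negbNE odd_n].
  have [m ->] : exists m, n = (2 * m)%N.
    by exists n./2; rewrite -{1}(odd_double_half n) (negbTE even_n) mul2n.
  by rewrite mul2n doubleK -mul2n dixon_identity exprM sqrrN !expr1n.
rewrite (alternating_sum_sym_odd (fun j => 'C(n, j)%:R ^+ 3) n odd_n).
  by rewrite -signr_odd odd_n expr1 sub0r opprK.
by move=> j le_jn; rewrite bin_sub.
Qed.
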